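(* Let $(G,\ell,\mathcal{C})$ be a triplet and let $C_1,C_2,\ldots,C_{q+1}\subseteq V(G)$ be pairwise disjoint vertex sets which pairwise have the same type in $(G,\ell,\mathcal{C})$. Let $\phi$ be an FO formula in prenex form having $q$ quantifiers. Then $G,\ell,\mathcal{C}\models\phi$ if and only if $G\setminus C_1,\ell,\mathcal{C}'\models\phi$, where $\mathcal{C}'$ is the restriction of $\mathcal{C}$ to $V(G)\setminus C_1$.
   Context: Graphs are finite and simple. There are vertex constants $u_1,u_2,\ldots$ and set constants $D_1,D_2,\ldots$, vertex variables $x_1,x_2,\ldots$ and set variables $X_1,X_2,\ldots$. A triplet $(G,\ell,\mathcal{C})$ consists of a graph $G$, a partial function $\ell$ (labeling) from vertex constants to $V(G)$, and a partial function $\mathcal{C}$ (coloring) from set constants to subsets of $V(G)$. MSO formulas are generated by $\phi\to\exists X.\phi\mid\exists x.\phi\mid\phi\lor\phi\mid\neg\phi\mid y\sim y\mid y=y\mid y\in Y$, where $y$ is a vertex variable or vertex constant and $Y$ a set variable or set constant; an FO formula is an MSO formula using no set variables. Semantics: $G,\ell,\mathcal{C}\models u_i\in D_j$ iff $\ell(u_i)$ is defined and $\ell(u_i)\in\mathcal{C}(D_j)$ (with $\mathcal{C}(D_j)$ defined); $u_i=u_j$ iff both are defined and $\ell(u_i)=\ell(u_j)$; $u_i\sim u_j$ iff both defined and $\ell(u_i)\ell(u_j)\in E(G)$; $\lor,\neg$ as usual; $G,\ell,\mathcal{C}\models\exists x_i.\phi$ iff there is $v\in V(G)$ such that $G,\ell',\mathcal{C}\models\phi[x_i\setminus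 u_i]$, where $\ell(u_i)$ is undefined, $\phi[x_i\setminus u_i]$ replaces every occurrence of $x_i$ by $u_i$, and $\ell'$ agrees with $\ell$ except $\ell'(u_i)=v$; similarly $G,\ell,\mathcal{C}\models\exists X_i.\phi$ iff there is $S\subseteq V(G)$ such that $G,\ell,\mathcal{C}'\models\phi[X_i\setminus D_i]$ where $\mathcal{C}(D_i)$ is undefined and $\mathcal{C}'$ agrees with $\mathcal{C}$ except $\mathcal{C}'(D_i)=S$. Otherwise the formula is not satisfied. Prenex form: all quantifiers at the beginning. An isomorphism between triplets $(G_1,\ell_1,\mathcal{C}_1)$ and $(G_2,\ell_2,\mathcal{C}_2)$ is a bijection $f:V(G_1)\to V(G_2)$ preserving adjacency and non-adjacency such that for every $u_i$ either both $\ell_1(u_i),\ell_2(u_i)$ are undefined or $f(\ell_1(u_i))=\ell_2(u_i)$, and for every $D_i$ either both $\mathcal{C}_1(D_i),\mathcal{C}_2(D_i)$ are undefined or $f(\mathcal{C}_1(D_i))=\mathcal{C}_2(D_i)$. Two sets $C_1,C_2\subseteq V(G)$ have the same type in $(G,\ell,\mathcal{C})$ if there is an isomorphism $f$ from $(G,\ell,\mathcal{C})$ to itself mapping elements of $C_1$ to $C_2$, elements of $C_2$ to $C_1$, and every vertex of $V(G)\setminus(C_1\cup C_2)$ to itself. The restriction of $\mathcal{C}$ to $V(G)\setminus C_1$ is the coloring $\mathcal{C}'$ with $\mathcal{C}'(D_i)=\mathcal{C}(D_i)\setminus C_1$ whenever $\mathcal{C}(D_i)$ is defined, and undefined otherwise.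 *)

From mathcomp Require Import all_boot.
Set Implicit Arguments. Unset Strict Implicit. Unset Printing Implicit Defensive.

(* A finite simple graph: a finite vertex set inside an ambient finite type,
   with a symmetric irreflexive adjacency relation (only its restriction to
   the vertex set matters). *)
Record graph (T : finType) := Graph {
  verts : {set T};
  adj : rel T;
  adj_sym : symmetric adj;
  adj_irr : irreflexive adj }.

Definition gdel (T : finType) (G : graph T) (C : {set T}) : graph T :=
  @Graph T (verts G :\: C) (adj G) (@adj_sym T G) (@adj_irr T G).

(* labeling: partial function from vertex constants u_i (index i) to vertices;
   coloring: partial function from set constants D_i to vertex sets. *)
Definition labeling (T : finType) := nat -> option T.
Definition coloring (T : finType) := nat -> option {set T}.

Definition triplet_ok (T : finType) (G : graph T) (l : labeling T)
  (c : coloring T) : Prop :=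
  (forall i v, l i = Some v -> v \in verts G) /\
  (forall i S, c i = Some S -> S \subset verts G).

Inductive vterm := VVar of nat | VConst of nat.
Inductive sterm := SVar of nat | SConst of nat.

Inductive formula :=
| ExS of nat & formula
| ExV of nat & formula
| Or of formula & formula
| Neg of formula
| Adj of vterm & vterm
| Eqv of vterm & vterm
| Mem of vterm & sterm.

Definition vsub (i : nat) (y : vterm) : vterm :=
  match y with VVar j => if j == i then VConst i else y | _ => y end.
Fixpoint substV (i : nat) (phi : formula) : formula :=
  match phi with
  | ExS j p => ExS j (substV i p)
  | ExV j p => ExV j (substV i p)
  | Or p r => Or (substV i p) (substV i r)
  | Neg p => Neg (substV i p)
  | Adj a b => Adj (vsub i a) (vsub i b)
  | Eqv a b => Eqv (vsub i a) (vsub i b)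
  | Mem a Y => Mem (vsub i a) Y
  end.

Definition ssub (i : nat) (Y : sterm) : sterm :=
  match Y with SVar j => if j == i then SConst i else Y | _ => Y end.
Fixpoint substS (i : nat) (phi : formula) : formula :=
  match phi with
  | ExS j p => ExS j (substS i p)
  | ExV j p => ExV j (substS i p)
  | Or p r => Or (substS i p) (substS i r)
  | Neg p => Neg (substS i p)
  | Adj a b => Adj a b
  | Eqv a b => Eqv a b
  | Mem a Y => Mem a (ssub i Y)
  end.

Fixpoint fsize (phi : formula) : nat :=
  match phi with
  | ExS _ p | ExV _ p | Neg p => (fsize p).+1
  | Or p r => (fsize p + fsize r).+1
  | _ => 1
  end.

Definition upd {A : Type} (f : nat -> option A) (i : nat) (a : A) :=
  fun j => if j == i then Some a else f j.

(* Semantics, with fuel (substitution preserves fsize, so fuel = fsize phi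
   suffices); variables left free make atoms unsatisfied. *)
Fixpoint satn (n : nat) (T : finType) (G : graph T) (l : labeling T)
  (c : coloring T) (phi : formula) {struct n} : Prop :=
  match n with
  | 0 => False
  | n'.+1 =>
    match phi with
    | ExS i p => c i = None /\
        exists S : {set T}, S \subset verts G /\ satn n' G l (upd c i S) (substS i p)
    | ExV i p => l i = None /\
        exists v, v \in verts G /\ satn n' G (upd l i v) c (substV i p)
    | Or p r => satn n' G l c p \/ satn n' G l c r
    | Neg p => ~ satn n' G l c p
    | Adj (VConst i) (VConst j) =>
        exists a b, l i = Some a /\ l j = Some b /\ adj G a b
    | Eqv (VConst i) (VConst j) =>
        exists a b, l i = Some a /\ l j = Some b /\ a = b
    | Mem (VConst i) (SConst j) =>
        exists a S, l i = Some a /\ c j = Some S /\ a \in S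
    | _ => False
    end
  end.

Definition models (T : finType) (G : graph T) (l : labeling T) (c : coloring T)
  (phi : formula) : Prop := satn (fsize phi) G l c phi.

Fixpoint qfree (phi : formula) : bool :=
  match phi with
  | ExS _ _ | ExV _ _ => false
  | Or p r => qfree p && qfree r
  | Neg p => qfree p
  | _ => true
  end.

Fixpoint prenex (phi : formula) : bool :=
  match phi with
  | ExS _ p | ExV _ p => prenex p
  | _ => qfree phi
  end.

Fixpoint nquant (phi : formula) : nat :=
  match phi with
  | ExS _ p | ExV _ p => (nquant p).+1
  | Or p r => nquant p + nquant r
  | Neg p => nquant p
  | _ => 0
  end.

Fixpoint is_FO (phi : formula) : bool :=
  match phi with
  | ExS _ _ => false
  | ExV _ p | Neg p => is_FO p
  | Or p r => is_FO p && is_FO r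
  | Mem _ (SVar _) => false
  | _ => true
  end.

Definition triplet_iso (T1 T2 : finType) (G1 : graph T1) (l1 : labeling T1)
  (c1 : coloring T1) (G2 : graph T2) (l2 : labeling T2) (c2 : coloring T2)
  (f : T1 -> T2) : Prop :=
  {in verts G1 &, injective f} /\ f @: verts G1 = verts G2 /\
  {in verts G1 &, forall x y, adj G2 (f x) (f y) = adj G1 x y} /\
  (forall i, match l1 i, l2 i with
             | None, None => True
             | Some a, Some b => f a = b
             | _, _ => False end) /\
  (forall i, match c1 i, c2 i with
             | None, None => True
             | Some S1, Some S2 => f @: S1 = S2
             | _, _ => False end).

Definition same_type (T : finType) (G : graph T) (l : labeling T)
  (c : coloring T) (C1 C2 : {set T}) : Prop :=
  exists f : T -> T, triplet_iso G l c G l c f /\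
    {in C1, forall x, f x \in C2} /\ {in C2, forall x, f x \in C1} /\
    {in verts G :\: (C1 :|: C2), forall x, f x = x}.

Definition restrict_col (T : finType) (c : coloring T) (C1 : {set T}) : coloring T :=
  fun i => omap (fun S => S :\: C1) (c i).

From mathcomp Require Import all_boot.
From Corelib Require Import Setoid.
Set Implicit Arguments. Unset Strict Implicit. Unset Printing Implicit Defensive.

(* Induction on the number q of quantifiers.  A quantifier-free formula only
   inspects labelled vertices, which lie outside C 0, so deleting C 0 does not
   change its truth value.  For a formula  exists x. psi,  a witness v in C 0
   can be replaced by its image in C 1 under an automorphism exchanging C 0 and
   C 1, which preserves FO truth.  Once x is interpreted by a vertex v outside
   C 0, v lies in at most one of C 1, ..., C q.+1; discarding that class leaves
   q classes, C 0 among them, that still pairwise have the same type in the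
   triplet with the new label v (the automorphisms witnessing this fix v), and
   the induction hypothesis applies to psi. *)

Lemma fsize_substV i p : fsize (substV i p) = fsize p.
Proof. by elim: p => //= [? ? -> | ? ? -> | ? -> ? -> | ? ->]. Qed.

Lemma qfree_substV i p : qfree (substV i p) = qfree p.
Proof. by elim: p => //= ? -> ? ->. Qed.

Lemma prenex_substV i p : prenex (substV i p) = prenex p.
Proof. by elim: p => //= [p _ r _ | p _]; rewrite ?qfree_substV. Qed.

Lemma is_FO_substV i p : is_FO (substV i p) = is_FO p.
Proof. by elim: p => //= ? -> ? ->. Qed.

Lemma nquant_substV i p : nquant (substV i p) = nquant p.
Proof. by elim: p => //= [? ? -> | ? ? -> | ? -> ? ->]. Qed.

Lemma prenex_nquant0_qfree phi : prenex phi -> nquant phi = 0 -> qfree phi.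
Proof. by case: phi. Qed.

Lemma qfree_nquant phi : qfree phi -> nquant phi = 0.
Proof. by elim: phi => //= p IHp r IHr /andP[/IHp-> /IHr->]. Qed.

Lemma prenex_FO_nquantS phi q : is_FO phi -> prenex phi -> nquant phi = q.+1 ->
  exists i p, phi = ExV i p.
Proof.
case: phi => //= [i p _ _ _ | p r _ | p _]; first by exists i, p.
  by case/andP=> /qfree_nquant-> /qfree_nquant->.
by move/qfree_nquant->.
Qed.

Lemma ex_Some2 (A B : Type) (x : option A) (y : option B) (P : A -> B -> Prop) :
  (exists a b, x = Some a /\ y = Some b /\ P a b) <->
  oapp (fun a => oapp (P a) False y) False x.
Proof.
case: x => [a|] /=; last by split=> [[? [? []]] | []].
case: y => [b|] /=; last by split=> [[? [? [_ []]]] | []].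
by split=> [[_ [_ [[<-] [[<-]]]]] | Pab]; last exists a, b.
Qed.

Definition labels_avoid T (l : labeling T) (A : {set T}) :=
  forall i v, l i = Some v -> v \notin A.

Lemma triplet_ok_updl T (G : graph T) (l : labeling T) (c : coloring T) i v :
  triplet_ok G l c -> v \in verts G -> triplet_ok G (upd l i v) c.
Proof.
move=> [l_G c_G] vG; split=> // j w; rewrite /upd.
by case: eqP => [_ [<-]|_ /l_G].
Qed.

Lemma labels_avoid_updl T (l : labeling T) A i v :
  labels_avoid l A -> v \notin A -> labels_avoid (upd l i v) A.
Proof. by move=> l_A vA j w; rewrite /upd; case: eqP => [_ [<-] | _ /l_A]. Qed.

Lemma triplet_iso_updl T1 T2 (G1 : graph T1) (l1 : labeling T1) (c1 : coloring T1)
    (G2 : graph T2) (l2 : labeling T2) (c2 : coloring T2) f i v :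
  triplet_iso G1 l1 c1 G2 l2 c2 f ->
  triplet_iso G1 (upd l1 i v) c1 G2 (upd l2 i (f v)) c2 f.
Proof.
move=> [f_inj [f_verts [f_adj [f_lab f_col]]]].
by do 3 split=> //; split=> // j; rewrite /upd; case: eqP => // _; apply: f_lab.
Qed.

Lemma same_type_updl T (G : graph T) (l : labeling T) (c : coloring T) A B i v :
  same_type G l c A B -> v \in verts G -> v \notin A -> v \notin B ->
  same_type G (upd l i v) c A B.
Proof.
move=> [f [iso [AB [BA f_id]]]] vG vA vB; exists f; split=> //.
have {2}<- : f v = v by apply: f_id; rewrite in_setD in_setU negb_or vA vB.
exact: triplet_iso_updl.
Qed.

Lemma satn_gdel_qfree T (G : graph T) (A : {set T}) n (l : labeling T)
  (c : coloring T) phi :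
  qfree phi -> labels_avoid l A ->
  satn n G l c phi <-> satn n (gdel G A) l (restrict_col c A) phi.
Proof.
move=> + l_A; elim: n phi => [//|n IH] [] //= => [p r /andP[/IH-> /IH->] | p /IH->|] //.
case=> // i [] // j _; rewrite !ex_Some2 /restrict_col.
case E: (l i) => [x|] //=; case: (c j) => [S|] //=.
by rewrite in_setD (l_A _ _ E).
Qed.

Lemma satn_iso T1 T2 (G1 : graph T1) (l1 : labeling T1) (c1 : coloring T1)
    (G2 : graph T2) (l2 : labeling T2) (c2 : coloring T2) f n phi :
  triplet_ok G1 l1 c1 -> triplet_iso G1 l1 c1 G2 l2 c2 f -> is_FO phi ->
  satn n G1 l1 c1 phi <-> satn n G2 l2 c2 phi.
Proof.
elim: n phi l1 l2 => [//|n IH] phi l1 l2 ok iso.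
have [f_inj [f_verts [f_adj [f_lab f_col]]]] := iso.
have lab j : l2 j = omap f (l1 j).
  by move: (f_lab j); case: (l1 j) (l2 j) => [?|] [?|] //= ->.
have col j : c2 j = omap (fun S : {set T1} => f @: S) (c1 j).
  by move: (f_col j); case: (c1 j) (c2 j) => [?|] [?|] //= ->.
have [l_G c_G] := ok.
case: phi => //= [i p FO_p | p r /andP[FO_p FO_r] | p FO_p | [] // i [] // j _
                | [] // i [] // j _ | [] // i [] // j _].
- have step v : v \in verts G1 ->
      satn n G1 (upd l1 i v) c1 (substV i p) <-> satn n G2 (upd l2 i (f v)) c2 (substV i p).
    move=> vG; apply: IH; rewrite ?is_FO_substV //.
      exact: triplet_ok_updl.
    exact: triplet_iso_updl.
  rewrite lab; case: (l1 i) => [x|] /=; first by split=> -[].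
  rewrite -f_verts; split=> -[_ [v [vG sat]]]; split=> //.
    by exists (f v); split; [exact: imset_f | exact/step].
  by case/imsetP: vG sat => w wG -> /(step w wG) sat; exists w.
- by rewrite (IH p l1 l2) ?(IH r l1 l2).
- by rewrite (IH p l1 l2).
- rewrite !ex_Some2 !lab; case E1: (l1 i) => [x|] //=; case E2: (l1 j) => [y|] //=.
  by rewrite f_adj // ?(l_G _ _ E1) ?(l_G _ _ E2).
- rewrite !ex_Some2 !lab; case E1: (l1 i) => [x|] //=; case E2: (l1 j) => [y|] //=.
  by split=> [-> // | /(f_inj _ _ (l_G _ _ E1) (l_G _ _ E2))].
- rewrite !ex_Some2 lab col; case E1: (l1 i) => [x|] //=; case E2: (c1 j) => [S|] //=.
  have [xG SG] := (l_G _ _ E1, subsetP (c_G _ _ E2)).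
  by split=> [/imset_f // | /imsetP[w wS /(f_inj _ _ xG (SG _ wS))->]].
Qed.

Lemma models_ExV T (G : graph T) (l : labeling T) (c : coloring T) i p :
  models G l c (ExV i p) <->
  l i = None /\ exists2 v, v \in verts G & models G (upd l i v) c (substV i p).
Proof.
rewrite /models /= fsize_substV.
by split=> -[li [v]]; [case=> vG sat | move=> vG sat]; split=> //; exists v.
Qed.

Lemma models_updl_same_type T (G : graph T) (l : labeling T) (c : coloring T) A B i v phi :
  triplet_ok G l c -> same_type G l c A B -> A \subset verts G -> is_FO phi -> v \in A ->
  exists2 w, w \in B & (models G (upd l i v) c phi <-> models G (upd l i w) c phi).
Proof.
move=> ok [f [iso [AB _]]] AG FO vA; exists (f v); first exact: AB.
apply: satn_iso FO; last exact: triplet_iso_updl.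
exact: triplet_ok_updl (subsetP AG _ vA).
Qed.

Lemma exists_index_avoiding_others T (C : nat -> {set T}) n v :
  (forall j k, j <= n.+1 -> k <= n.+1 -> j != k -> [disjoint C j & C k]) ->
  v \notin C 0 ->
  exists2 d, 0 < d <= n.+1 & forall k, k <= n.+1 -> k != d -> v \notin C k.
Proof.
move=> disj vC0; case: (pickP [pred k : 'I_n.+2 | v \in C k]) => [k /= vCk | none].
  have k_gt0 : 0 < k by rewrite lt0n; apply: contraNneq vC0 => <-.
  exists k; first by rewrite k_gt0 -ltnS ltn_ord.
  by move=> j j_le jk; rewrite (disjointFr (disj k j _ j_le _) vCk) 1?eq_sym // -ltnS.
exists n.+1 => [|k k_le _]; first by rewrite leqnn.
by move: (none (Ordinal (k_le : k < n.+2))) => /= ->.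
Qed.

Definition same_type_family T (G : graph T) (l : labeling T) (c : coloring T) q
    (C : nat -> {set T}) : Prop :=
  [/\ forall k, k <= q -> C k \subset verts G,
      forall j k, j <= q -> k <= q -> j != k -> [disjoint C j & C k] &
      forall j k, j <= q -> k <= q -> j != k -> same_type G l c (C j) (C k)].

Lemma same_type_family_updl T (G : graph T) (l : labeling T) (c : coloring T) q C i v :
  same_type_family G l c q.+1 C -> v \in verts G -> v \notin C 0 ->
  exists2 C', C' 0 = C 0 & same_type_family G (upd l i v) c q C'.
Proof.
move=> [CG disj st] vG vC0.
(* Drop the only class C d that may contain v; [bump d] enumerates the others
   and fixes 0. *)
have [d /andP[d_gt0 d_le] vC] := exists_index_avoiding_others disj vC0.
have bump_le k : k <= q -> bump d k <= q.+1 by rewrite /bump -add1n; apply: leq_add (leq_b1 _).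
have bump_neq j k : j != k -> bump d j != bump d k by rewrite (inj_eq (can_inj (bumpK d))).
have vCb k : k <= q -> v \notin C (bump d k) by move/bump_le/vC; rewrite eq_sym neq_bump; apply.
exists (C \o bump d); first by rewrite /= /bump leqNgt d_gt0.
split=> [k /bump_le/CG // | j k j_le k_le jk | j k j_le k_le jk] /=.
- by apply: disj; rewrite ?bump_le ?bump_neq.
- by apply: same_type_updl; rewrite ?vCb //; apply: st; rewrite ?bump_le ?bump_neq.
Qed.

Lemma models_gdel_same_type_family T (G : graph T) (c : coloring T) q :
  forall (l : labeling T) C phi,
  triplet_ok G l c -> same_type_family G l c q C -> labels_avoid l (C 0) ->
  is_FO phi -> prenex phi -> nquant phi = q ->
  models G l c phi <-> models (gdel G (C 0)) l (restrict_col c (C 0)) phi.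
Proof.
elim: q => [|q IH] l C phi ok fam l_C0 FO pre nq.
  by apply: satn_gdel_qfree l_C0; apply: prenex_nquant0_qfree.
have [i [p phiE]] := prenex_FO_nquantS FO pre nq; subst phi.
move: FO pre nq => /= FO pre [nq].
have [CG disj st] := fam.
have sat_updl v : v \in verts G -> v \notin C 0 ->
    models G (upd l i v) c (substV i p) <->
    models (gdel G (C 0)) (upd l i v) (restrict_col c (C 0)) (substV i p).
  move=> vG vC0; have [C' C'0 fam'] := same_type_family_updl i fam vG vC0.
  rewrite -C'0; apply: IH fam' _ _ _ _; rewrite ?is_FO_substV ?prenex_substV ?nquant_substV //.
    exact: triplet_ok_updl.
  by apply: labels_avoid_updl; rewrite C'0.
rewrite !models_ExV; split=> -[li [v vG sat]]; split=> //; last first.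
  by move: vG; rewrite in_setD => /andP[vC0 vG]; exists v; last exact/sat_updl.
have [vC0 | vC0] := boolP (v \in C 0); last first.
  by exists v; [rewrite in_setD vC0 | exact/sat_updl].
have FO' : is_FO (substV i p) by rewrite is_FO_substV.
have [w wC1 sat_vw] := models_updl_same_type i ok (st 0 1 isT isT isT) (CG 0 isT) FO' vC0.
have wG : w \in verts G := subsetP (CG 1 isT) _ wC1.
have wC0 : w \notin C 0 by rewrite (disjointFl (disj 0 1 isT isT isT) wC1).
by exists w; [rewrite in_setD wC0 | apply/(sat_updl w wG wC0)/sat_vw].
Qed.

Theorem lemma12 (T : finType) (G : graph T) (l : labeling T) (c : coloring T)
  (q : nat) (C : nat -> {set T}) (phi : formula) :
  triplet_ok G l c ->
  (forall i, i <= q -> C i \subset verts G) ->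
  (forall i j, i <= q -> j <= q -> i != j -> [disjoint C i & C j]) ->
  (forall i j, i <= q -> j <= q -> i != j -> same_type G l c (C i) (C j)) ->
  (forall i v, l i = Some v -> v \notin C 0) ->
  is_FO phi -> prenex phi -> nquant phi = q ->
  (models G l c phi <-> models (gdel G (C 0)) l (restrict_col c (C 0)) phi).
Proof.
move=> ok CG disj st; apply: models_gdel_same_type_family ok _.
by split.
Qed.
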